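(* Let $N\in\mathbb N^+$, $\phi(\xi)=\xi\sqrt{\xi^2+1}$. Then there is $C>0$ independent of $N$ such that for all $0<|t|\le N^{-1}$ and all $x\in[-1,1]$, $$\Big|\sum_{1\le k\le N}e^{i(t\phi(k)+kx)}\Big|\le C|t|^{-1/2}.$$ *)

From Stdlib Require Import Reals.
From Coquelicot Require Import Coquelicot.
Open Scope R_scope.

Definition phi (xi : R) : R := xi * sqrt (xi ^ 2 + 1).

Definition expi (theta : R) : Complex.C := (cos theta, sin theta).

Definition SN (N : nat) (t x : R) : Complex.C :=
  sum_n_m (fun k : nat => expi (t * phi (INR k) + INR k * x)) 1 N.

(** The sum is a Weyl sum with phase [G k = t phi(k) + k x], whose increments
    [D k = G (k+1) - G k] lie in [[-3, 3]] and increase by at least [t] per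
    step, because the second differences of [phi] are at least [1].  Cutting
    [[1, N]] at the points where [D] crosses [-sqrt t] and [sqrt t] leaves at
    most [2/sqrt t + 1] terms in the middle, while on each outer block
    [|D| >= sqrt t] and the Kusmin-Landau argument applies: writing
    [cos G(k+1)] as a telescoping term plus [cot(D k/2)/2 (sin G(k+1) - sin G k)],
    the coefficients are monotone and bounded by [2/sqrt t], so Abel summation
    bounds each block by [O(1/sqrt t)]. *)
From Stdlib Require Import Reals Lra Lia Psatz.
From Coquelicot Require Import Coquelicot.
Open Scope R_scope.

Lemma sin_ge_half (h : R) : 0 <= h -> h <= 3/2 -> h/2 <= sin h.
Proof.
  intros H0 H1.
  assert (HPI := PI2_3_2).
  destruct (sin_bound h 0 H0 ltac:(lra)) as [Hlb _].
  unfold sin_approx, sin_term in Hlb; simpl in Hlb.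
  nra.
Qed.

Lemma Rabs_sin_ge_half (h : R) : Rabs h <= 3/2 -> Rabs h / 2 <= Rabs (sin h).
Proof.
  intros H. destruct (Rle_or_lt 0 h) as [H0|H0].
  - rewrite Rabs_right in * by lra.
    pose proof (sin_ge_half h H0 H). rewrite Rabs_right; lra.
  - rewrite Rabs_left in * by lra.
    pose proof (sin_ge_half (-h) ltac:(lra) H). rewrite sin_neg in *.
    rewrite Rabs_left1; lra.
Qed.

Lemma sin_pos_le_3_2 (h : R) : 0 < h -> h <= 3/2 -> 0 < sin h.
Proof. intros. pose proof PI2_3_2. apply sin_gt_0; lra. Qed.

Definition half_cot (h : R) : R := cos (h/2) / (2 * sin (h/2)).

(* With [v - u = h], [1 / (1 - e^{-ih}) = 1/2 + (i/2) cot (h/2)]; taking real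
   parts of [e^{iv} = (e^{iv} - e^{iu}) / (1 - e^{-ih})] gives the identity. *)
Lemma cos_eq_telescope_half_cot (u v : R) : sin ((v - u)/2) <> 0 ->
  cos v = 1/2 * (cos v - cos u) + half_cot (v - u) * (sin v - sin u).
Proof.
  intros Hs. unfold half_cot.
  set (h := (v - u)/2) in *. set (m := (u + v)/2).
  replace v with (m + h) by (unfold m, h; field).
  replace u with (m - h) by (unfold m, h; field).
  replace ((m + h - (m - h))/2) with h by field.
  rewrite cos_plus, cos_minus, sin_plus, sin_minus. field. exact Hs.
Qed.

Lemma half_cot_bound (d h : R) : 0 < d -> d <= Rabs h <= 3 ->
  sin (h/2) <> 0 /\ Rabs (half_cot h) <= 2/d.
Proof.
  intros Hd [Hlo Hhi].
  assert (Hh : Rabs (h/2) = Rabs h / 2).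
  { unfold Rdiv. rewrite Rabs_mult, Rabs_inv, (Rabs_right 2); lra. }
  assert (Hs : d/4 <= Rabs (sin (h/2))).
  { pose proof (Rabs_sin_ge_half (h/2) ltac:(lra)). lra. }
  assert (Hs0 : sin (h/2) <> 0).
  { intro E. rewrite E, Rabs_R0 in Hs. lra. }
  split; [exact Hs0|].
  assert (Hc : Rabs (cos (h/2)) <= 1) by (apply Rabs_le, COS_bound).
  unfold half_cot, Rdiv.
  rewrite Rabs_mult, Rabs_inv, Rabs_mult, (Rabs_right 2) by lra.
  apply (Rmult_le_reg_r (2 * Rabs (sin (h/2)))); [lra|].
  rewrite Rmult_assoc, Rinv_l by lra.
  replace (2 * / d * (2 * Rabs (sin (h/2)))) with (4 * (/ d * Rabs (sin (h/2))))
    by ring.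
  assert (1 <= / d * Rabs (sin (h/2)) * 4).
  { apply (Rmult_le_reg_l d); [lra|].
    replace (d * (/ d * Rabs (sin (h/2)) * 4)) with (4 * Rabs (sin (h/2)))
      by (field; lra). lra. }
  pose proof (Rabs_pos (cos (h/2))). nra.
Qed.

Lemma half_cot_antitone (h h' : R) : h <= h' ->
  (0 < h /\ h' <= 3) \/ (-3 <= h /\ h' < 0) -> half_cot h' <= half_cot h.
Proof.
  intros Hle Hsign. pose proof PI2_3_2.
  assert (Hprod : 0 < sin (h/2) * sin (h'/2)).
  { destruct Hsign as [[? ?]|[? ?]].
    - apply Rmult_lt_0_compat; apply sin_pos_le_3_2; lra.
    - pose proof (sin_pos_le_3_2 (- (h/2)) ltac:(lra) ltac:(lra)).
      pose proof (sin_pos_le_3_2 (- (h'/2)) ltac:(lra) ltac:(lra)).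
      rewrite !sin_neg in *. nra. }
  assert (Hs : sin (h/2) <> 0) by (intro E; rewrite E in Hprod; lra).
  assert (Hs' : sin (h'/2) <> 0) by (intro E; rewrite E in Hprod; lra).
  assert (Hdiff : 0 <= sin (h'/2 - h/2)) by (apply sin_ge_0; lra).
  assert (E : half_cot h - half_cot h' = sin (h'/2 - h/2) / (2 * (sin (h/2) * sin (h'/2)))).
  { unfold half_cot. rewrite sin_minus. field. auto. }
  assert (0 <= sin (h'/2 - h/2) / (2 * (sin (h/2) * sin (h'/2)))).
  { apply Rmult_le_pos; [exact Hdiff|]. left. apply Rinv_0_lt_compat. lra. }
  lra.
Qed.

(* [sum_from f a n = f a + ... + f (a + n - 1)]; indexing by length rather than
   by the last index lets blocks of the decomposition below be empty. *)
Fixpoint sum_from (f : nat -> R) (a n : nat) : R :=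
  match n with O => 0 | S n => sum_from f a n + f (a + n)%nat end.

Lemma sum_from_ext (f g : nat -> R) a n :
  (forall k, (a <= k < a + n)%nat -> f k = g k) -> sum_from f a n = sum_from g a n.
Proof.
  induction n as [|n IH]; simpl; intros H; [reflexivity|].
  rewrite IH, H by (try (intros; apply H); lia). reflexivity.
Qed.

Lemma sum_from_plus (f g : nat -> R) a n :
  sum_from (fun k => f k + g k) a n = sum_from f a n + sum_from g a n.
Proof. induction n as [|n IH]; simpl; [lra|]. rewrite IH. ring. Qed.

Lemma sum_from_scal (c : R) (f : nat -> R) a n :
  sum_from (fun k => c * f k) a n = c * sum_from f a n.
Proof. induction n as [|n IH]; simpl; [lra|]. rewrite IH. ring. Qed.

Lemma sum_from_opp (f : nat -> R) a n :
  sum_from (fun k => - f k) a n = - sum_from f a n.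
Proof. induction n as [|n IH]; simpl; [lra|]. rewrite IH. ring. Qed.

Lemma sum_from_telescope (w : nat -> R) a n :
  sum_from (fun k => w (S k) - w k) a n = w (a + n)%nat - w a.
Proof.
  induction n as [|n IH]; simpl.
  - rewrite Nat.add_0_r. ring.
  - rewrite IH, Nat.add_succ_r. ring.
Qed.

Lemma sum_from_split (f : nat -> R) a n m :
  sum_from f a (n + m) = sum_from f a n + sum_from f (a + n) m.
Proof.
  induction m as [|m IH]; simpl.
  - rewrite Nat.add_0_r. ring.
  - rewrite Nat.add_succ_r. simpl. rewrite IH, Nat.add_assoc. ring.
Qed.

Lemma Rabs_sum_from_le (f : nat -> R) a n :
  (forall k, Rabs (f k) <= 1) -> Rabs (sum_from f a n) <= INR n.
Proof.
  intros Hf. induction n as [|n IH]; cbn [sum_from].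
  - rewrite Rabs_R0. simpl. lra.
  - rewrite S_INR. pose proof (Hf (a + n)%nat).
    pose proof (Rabs_triang (sum_from f a n) (f (a + n)%nat)). lra.
Qed.

Lemma abel_summation (r w : nat -> R) j m :
  (forall k, Rabs (w k) <= 1) ->
  (forall k, (j <= k < j + m)%nat -> r (S k) <= r k) ->
  Rabs (sum_from (fun k => r k * (w (S k) - w k)) j (S m) - r (j + m)%nat * w (S (j + m)))
    <= Rabs (r j) + (r j - r (j + m)%nat).
Proof.
  intros Hw. induction m as [|m IH]; intros Hr.
  - simpl. rewrite Nat.add_0_r.
    replace (0 + r j * (w (S j) - w j) - r j * w (S j)) with (- (r j * w j)) by ring.
    rewrite Rabs_Ropp, Rabs_mult.
    pose proof (Hw j). pose proof (Rabs_pos (r j)). nra.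
  - specialize (IH ltac:(intros; apply Hr; lia)).
    rewrite Nat.add_succ_r.
    assert (Hd : r (S (j + m)) <= r (j + m)%nat) by (apply Hr; lia).
    change (sum_from (fun k => r k * (w (S k) - w k)) j (S (S m))) with
      (sum_from (fun k => r k * (w (S k) - w k)) j (S m)
       + r (j + S m)%nat * (w (S (j + S m)) - w (j + S m)%nat)).
    rewrite Nat.add_succ_r.
    set (T := sum_from (fun k => r k * (w (S k) - w k)) j (S m)) in *.
    replace (T + r (S (j + m)) * (w (S (S (j + m))) - w (S (j + m)))
             - r (S (j + m)) * w (S (S (j + m))))
      with ((T - r (j + m)%nat * w (S (j + m)))
            + (r (j + m)%nat - r (S (j + m))) * w (S (j + m))) by ring.
    eapply Rle_trans; [apply Rabs_triang|].
    rewrite Rabs_mult, (Rabs_right (r (j + m)%nat - r (S (j + m)))) by lra.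
    pose proof (Hw (S (j + m))). nra.
Qed.

Lemma abel_summation_bound (r w : nat -> R) (B : R) j m :
  (forall k, Rabs (w k) <= 1) ->
  (forall k, (j <= k < j + m)%nat -> r (S k) <= r k) ->
  (forall k, (j <= k <= j + m)%nat -> Rabs (r k) <= B) ->
  Rabs (sum_from (fun k => r k * (w (S k) - w k)) j (S m)) <= 4 * B.
Proof.
  intros Hw Hmono Hr.
  pose proof (abel_summation r w j m Hw Hmono) as A.
  set (T := sum_from _ j (S m)) in *.
  pose proof (Hr j ltac:(lia)) as Hj. pose proof (Hr (j + m)%nat ltac:(lia)) as Hjm.
  assert (Rabs (r (j + m)%nat * w (S (j + m))) <= B).
  { rewrite Rabs_mult. pose proof (Hw (S (j + m))).
    pose proof (Rabs_pos (r (j + m)%nat)). nra. }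
  pose proof (Rabs_triang (T - r (j + m)%nat * w (S (j + m))) (r (j + m)%nat * w (S (j + m)))).
  replace (T - r (j + m)%nat * w (S (j + m)) + r (j + m)%nat * w (S (j + m))) with T in *
    by ring.
  apply Rabs_le_between in Hj; apply Rabs_le_between in Hjm.
  assert (Rabs (r j) <= B) by (apply Rabs_le; lra). lra.
Qed.

Definition fwd_diff (G : nat -> R) (k : nat) : R := G (S k) - G k.

Lemma kusmin_landau_block (G : nat -> R) (d : R) j n :
  0 < d ->
  (forall k, fwd_diff G k <= fwd_diff G (S k)) ->
  (forall k, (j <= k < j + n)%nat -> d <= fwd_diff G k <= 3) \/
  (forall k, (j <= k < j + n)%nat -> -3 <= fwd_diff G k <= -d) ->
  Rabs (sum_from (fun k => cos (G (S k))) j n) <= 1 + 8/d.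
Proof.
  intros Hd Hmono Hblock.
  destruct n as [|m].
  { simpl. rewrite Rabs_R0. assert (0 < 8/d) by (apply Rdiv_lt_0_compat; lra). lra. }
  set (r := fun k => half_cot (fwd_diff G k)).
  assert (Hcot : forall k, (j <= k <= j + m)%nat ->
            sin (fwd_diff G k / 2) <> 0 /\ Rabs (r k) <= 2/d).
  { intros k Hk. apply half_cot_bound; [exact Hd|].
    destruct Hblock as [Hb|Hb]; specialize (Hb k ltac:(lia)).
    - rewrite Rabs_right; lra.
    - rewrite Rabs_left; lra. }
  assert (Hr_antitone : forall k, (j <= k < j + m)%nat -> r (S k) <= r k).
  { intros k Hk. apply half_cot_antitone; [apply Hmono|].
    destruct Hblock as [Hb|Hb]; [left|right];
      pose proof (Hb k ltac:(lia)); pose proof (Hb (S k) ltac:(lia)); lra. }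
  assert (Hcos : forall k, Rabs (cos (G k)) <= 1) by (intros; apply Rabs_le, COS_bound).
  assert (Hsin : forall k, Rabs (sin (G k)) <= 1) by (intros; apply Rabs_le, SIN_bound).
  rewrite (sum_from_ext _
    (fun k => 1/2 * (cos (G (S k)) - cos (G k)) + r k * (sin (G (S k)) - sin (G k))))
    by (intros k Hk; apply cos_eq_telescope_half_cot, Hcot; lia).
  rewrite sum_from_plus, sum_from_scal, (sum_from_telescope (fun k => cos (G k))).
  pose proof (abel_summation_bound r (fun k => sin (G k)) (2/d) j m Hsin Hr_antitone
                (fun k Hk => proj2 (Hcot k Hk))).
  assert (Rabs (1/2 * (cos (G (j + S m)%nat) - cos (G j))) <= 1).
  { rewrite Rabs_mult, Rabs_right by lra.
    pose proof (Rabs_triang (cos (G (j + S m)%nat)) (- cos (G j))) as Ht.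
    rewrite Rabs_Ropp in Ht. pose proof (Hcos (j + S m)%nat). pose proof (Hcos j).
    unfold Rminus. lra. }
  eapply Rle_trans; [apply Rabs_triang|]. lra.
Qed.

Lemma nondecreasing_cut (D : nat -> R) (c : R) j n :
  (forall k, D k <= D (S k)) ->
  exists m, (m <= n)%nat /\ (forall k, (j <= k < j + m)%nat -> D k < c) /\
            (forall k, (j + m <= k < j + n)%nat -> c <= D k).
Proof.
  intros Hmono. induction n as [|n (m & Hm & Hlt & Hge)].
  - exists 0%nat. split; [lia|]. split; intros; lia.
  - destruct (Nat.eq_dec m n) as [->|Hne].
    + destruct (Rlt_dec (D (j + n)%nat) c) as [Hc|Hc].
      * exists (S n). split; [lia|]. split; [|intros; lia].
        intros k Hk. destruct (Nat.eq_dec k (j + n)) as [->|]; [exact Hc|].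
        apply Hlt; lia.
      * exists n. split; [lia|]. split; [exact Hlt|].
        intros k Hk. replace k with (j + n)%nat by lia. lra.
    + exists m. split; [lia|]. split; [exact Hlt|].
      intros k Hk. destruct (Nat.eq_dec k (j + n)) as [->|]; [|apply Hge; lia].
      replace (j + n)%nat with (S (j + n - 1)) by lia.
      pose proof (Hmono (j + n - 1)%nat). pose proof (Hge (j + n - 1)%nat ltac:(lia)). lra.
Qed.

Lemma linear_growth (D : nat -> R) (t : R) j i :
  (forall k, D k + t <= D (S k)) -> D j + INR i * t <= D (j + i)%nat.
Proof.
  intros H. induction i as [|i IH].
  - rewrite Nat.add_0_r. simpl. lra.
  - rewrite S_INR, Nat.add_succ_r. pose proof (H (j + i)%nat). lra.
Qed.

Lemma short_transition (D : nat -> R) (d : R) j m :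
  0 < d -> (forall k, D k + d * d <= D (S k)) ->
  (forall k, (j <= k < j + m)%nat -> -d <= D k < d) ->
  INR m <= 2/d + 1.
Proof.
  intros Hd Hgrow Hmid.
  assert (0 < 2/d) by (apply Rdiv_lt_0_compat; lra).
  destruct m as [|p]; [simpl; lra|].
  pose proof (linear_growth D (d * d) j p Hgrow).
  pose proof (Hmid j ltac:(lia)). pose proof (Hmid (j + p)%nat ltac:(lia)).
  assert (Hp : INR p * d < 2) by nra.
  assert (INR p < 2/d).
  { apply (Rmult_lt_reg_r d); [exact Hd|].
    replace (2/d * d) with 2 by (field; lra). exact Hp. }
  rewrite S_INR. lra.
Qed.

Lemma cos_sum_bound (G : nat -> R) (d : R) N :
  0 < d <= 1 ->
  (forall k, (k < N)%nat -> Rabs (fwd_diff G k) <= 3) ->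
  (forall k, fwd_diff G k + d * d <= fwd_diff G (S k)) ->
  Rabs (sum_from (fun k => cos (G (S k))) 0 N) <= 21/d.
Proof.
  intros Hd Hbound Hgrow.
  assert (Hmono : forall k, fwd_diff G k <= fwd_diff G (S k))
    by (intros k; pose proof (Hgrow k); nra).
  destruct (nondecreasing_cut (fwd_diff G) (-d) 0 N Hmono) as (m1 & Hm1 & Hneg & Hge).
  destruct (nondecreasing_cut (fwd_diff G) d m1 (N - m1) Hmono) as (m2 & Hm2 & Hlt & Hpos).
  set (m3 := (N - m1 - m2)%nat).
  assert (HN : N = (m1 + (m2 + m3))%nat) by (unfold m3; lia).
  assert (Hbound' : forall k, (k < N)%nat -> -3 <= fwd_diff G k <= 3)
    by (intros k Hk; apply Rabs_le_between, Hbound, Hk).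
  assert (K1 : Rabs (sum_from (fun k => cos (G (S k))) 0 m1) <= 1 + 8/d).
  { apply kusmin_landau_block; [lra|exact Hmono|]. right. intros k Hk.
    pose proof (Hneg k Hk). pose proof (Hbound' k ltac:(lia)). lra. }
  assert (K2 : Rabs (sum_from (fun k => cos (G (S k))) m1 m2) <= 2/d + 1).
  { eapply Rle_trans; [apply Rabs_sum_from_le; intros; apply Rabs_le, COS_bound|].
    apply (short_transition (fwd_diff G) d m1); [lra|exact Hgrow|].
    intros k Hk. pose proof (Hge k ltac:(lia)). pose proof (Hlt k Hk). lra. }
  assert (K3 : Rabs (sum_from (fun k => cos (G (S k))) (m1 + m2) m3) <= 1 + 8/d).
  { apply kusmin_landau_block; [lra|exact Hmono|]. left. intros k Hk.
    pose proof (Hpos k ltac:(lia)). pose proof (Hbound' k ltac:(lia)). lra. }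
  rewrite HN, !sum_from_split. simpl (0 + m1)%nat.
  assert (3 <= 3/d).
  { apply (Rmult_le_reg_r d); [lra|]. replace (3/d * d) with 3 by (field; lra). nra. }
  pose proof (Rabs_triang (sum_from (fun k => cos (G (S k))) 0 m1
                           + sum_from (fun k => cos (G (S k))) m1 m2)
                          (sum_from (fun k => cos (G (S k))) (m1 + m2) m3)).
  pose proof (Rabs_triang (sum_from (fun k => cos (G (S k))) 0 m1)
                          (sum_from (fun k => cos (G (S k))) m1 m2)).
  replace (21/d) with ((1 + 8/d) + (2/d + 1) + (1 + 8/d) + (3/d - 3)) by (field; lra).
  rewrite Rplus_assoc in *. lra.
Qed.

Lemma sin_sum_bound (G : nat -> R) (d : R) N :
  0 < d <= 1 ->
  (forall k, (k < N)%nat -> Rabs (fwd_diff G k) <= 3) ->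
  (forall k, fwd_diff G k + d * d <= fwd_diff G (S k)) ->
  Rabs (sum_from (fun k => sin (G (S k))) 0 N) <= 21/d.
Proof.
  intros Hd Hbound Hgrow.
  assert (Hshift : forall k, fwd_diff (fun k => G k - PI/2) k = fwd_diff G k)
    by (intros; unfold fwd_diff; ring).
  rewrite (sum_from_ext _ (fun k => cos (G (S k) - PI/2))).
  - apply (cos_sum_bound (fun k => G k - PI/2)); [exact Hd| |];
      intros; rewrite !Hshift; auto.
  - intros k _. replace (G (S k) - PI/2) with (- (PI/2 - G (S k))) by ring.
    rewrite cos_neg, cos_shift. reflexivity.
Qed.

Lemma phi_sandwich (j : R) : 0 <= j -> j^2 <= phi j <= j^2 + 1/2.
Proof.
  intros Hj. unfold phi.
  pose proof (sqrt_sqrt (j^2 + 1) ltac:(nra)). pose proof (sqrt_pos (j^2 + 1)).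
  set (s := sqrt (j^2 + 1)) in *.
  assert (j <= s) by nra.
  split; nra.
Qed.

Lemma phi_ge (j : R) : 1 <= j -> j^2 + 3/8 <= phi j.
Proof.
  intros Hj. unfold phi.
  pose proof (sqrt_sqrt (j^2 + 1) ltac:(nra)). pose proof (sqrt_pos (j^2 + 1)).
  set (s := sqrt (j^2 + 1)) in *.
  assert (j <= s) by nra.
  assert (s <= 5/3 * j) by nra.
  (* [j (s - j) = j / (s + j) >= 3/8] *)
  assert (j * (s - j) * (s + j) = j) by nra.
  nra.
Qed.

Lemma phi_second_diff_ge (j : R) : 0 <= j -> 1 <= phi (j + 2) - 2 * phi (j + 1) + phi j.
Proof.
  intros Hj.
  pose proof (phi_sandwich j Hj). pose proof (phi_sandwich (j + 1) ltac:(lra)).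
  pose proof (phi_ge (j + 2) ltac:(lra)). nra.
Qed.

Definition phase (t x : R) (k : nat) : R := t * phi (INR k) + INR k * x.

Lemma fwd_diff_phase (t x : R) k :
  fwd_diff (phase t x) k = t * (phi (INR k + 1) - phi (INR k)) + x.
Proof. unfold fwd_diff, phase. rewrite S_INR. ring. Qed.

Lemma phase_fwd_diff_bound (t x : R) N :
  0 < t -> t * INR N <= 1 -> -1 <= x <= 1 ->
  forall k, (k < N)%nat -> Rabs (fwd_diff (phase t x) k) <= 3.
Proof.
  intros Ht HtN Hx k Hk. rewrite fwd_diff_phase.
  assert (INR k + 1 <= INR N) by (rewrite <- S_INR; apply le_INR; lia).
  pose proof (pos_INR k).
  pose proof (phi_sandwich (INR k) ltac:(lra)).
  pose proof (phi_sandwich (INR k + 1) ltac:(lra)).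
  assert (0 <= phi (INR k + 1) - phi (INR k) <= 2 * INR N) by nra.
  apply Rabs_le. nra.
Qed.

Lemma phase_fwd_diff_growth (t x : R) k :
  0 < t -> fwd_diff (phase t x) k + t <= fwd_diff (phase t x) (S k).
Proof.
  intros Ht. rewrite !fwd_diff_phase, S_INR.
  pose proof (phi_second_diff_ge (INR k) (pos_INR k)).
  replace (INR k + 1 + 1) with (INR k + 2) by ring. nra.
Qed.

Lemma trig_sums_phase_bound_pos (N : nat) (t x : R) :
  (1 <= N)%nat -> 0 < t -> t <= / INR N -> -1 <= x <= 1 ->
  Rabs (sum_from (fun k => cos (phase t x (S k))) 0 N) <= 21 / sqrt t /\
  Rabs (sum_from (fun k => sin (phase t x (S k))) 0 N) <= 21 / sqrt t.
Proof.
  intros HN Ht HtN Hx.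
  assert (HN1 : 1 <= INR N) by (apply (le_INR 1); lia).
  assert (HtN' : t * INR N <= 1).
  { apply (Rmult_le_compat_r (INR N)) in HtN; [|lra]. rewrite Rinv_l in HtN; lra. }
  assert (Hd : 0 < sqrt t <= 1).
  { split; [apply sqrt_lt_R0, Ht|]. rewrite <- sqrt_1. apply sqrt_le_1_alt. nra. }
  pose proof (phase_fwd_diff_bound t x N Ht HtN' Hx) as Hb.
  assert (Hg : forall k, fwd_diff (phase t x) k + sqrt t * sqrt t
                         <= fwd_diff (phase t x) (S k)).
  { intros k. rewrite sqrt_sqrt by lra. apply phase_fwd_diff_growth, Ht. }
  split; [apply cos_sum_bound | apply sin_sum_bound]; assumption.
Qed.

Lemma trig_sums_phase_bound (N : nat) (t x : R) :
  (1 <= N)%nat -> 0 < Rabs t -> Rabs t <= / INR N -> -1 <= x <= 1 ->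
  Rabs (sum_from (fun k => cos (phase t x (S k))) 0 N) <= 21 / sqrt (Rabs t) /\
  Rabs (sum_from (fun k => sin (phase t x (S k))) 0 N) <= 21 / sqrt (Rabs t).
Proof.
  intros HN Ht HtN Hx.
  destruct (Rle_or_lt 0 t) as [Ht0|Ht0].
  - rewrite (Rabs_right t) in * by lra. apply trig_sums_phase_bound_pos; [exact HN|lra..].
  - rewrite (Rabs_left t) in * by lra.
    destruct (trig_sums_phase_bound_pos N (-t) (-x) HN ltac:(lra) HtN ltac:(lra))
      as [Hc Hs].
    assert (Hneg : forall k, phase (-t) (-x) k = - phase t x k)
      by (intros; unfold phase; ring).
    rewrite (sum_from_ext _ (fun k => cos (phase t x (S k)))) in Hc
      by (intros; rewrite Hneg, cos_neg; reflexivity).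
    rewrite (sum_from_ext _ (fun k => - sin (phase t x (S k)))) in Hs
      by (intros; rewrite Hneg, sin_neg; reflexivity).
    rewrite sum_from_opp, Rabs_Ropp in Hs. split; assumption.
Qed.

Lemma SN_trig_sums N t x :
  SN N t x = (sum_from (fun k => cos (phase t x (S k))) 0 N,
              sum_from (fun k => sin (phase t x (S k))) 0 N).
Proof.
  unfold SN. induction N as [|N IH].
  - rewrite sum_n_m_zero by lia. reflexivity.
  - rewrite sum_n_Sm, IH by lia. reflexivity.
Qed.

Theorem lemma2p9 :
  exists Cst : R, 0 < Cst /\
    forall (N : nat) (t x : R),
      (1 <= N)%nat ->
      0 < Rabs t -> Rabs t <= / INR N ->
      -1 <= x <= 1 ->
      Cmod (SN N t x) <= Cst * Rpower (Rabs t) (-(1/2)).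
Proof.
  exists 42. split; [lra|].
  intros N t x HN Ht HtN Hx.
  rewrite Rpower_Ropp, Rdiv_1_l, Rpower_sqrt by exact Ht.
  destruct (trig_sums_phase_bound N t x HN Ht HtN Hx) as [Hc Hs].
  rewrite SN_trig_sums.
  eapply Rle_trans; [apply Cmod_2Rmax|]. simpl fst; simpl snd.
  assert (Hsqrt2 : sqrt 2 <= 2)
    by (pose proof (sqrt_sqrt 2 ltac:(lra)); pose proof Rlt_sqrt2_0; nra).
  assert (0 < 21 / sqrt (Rabs t)) by (apply Rdiv_lt_0_compat; [lra|apply sqrt_lt_R0, Ht]).
  pose proof (Rmax_lub _ _ _ Hc Hs).
  pose proof (Rmax_l (Rabs (sum_from (fun k => cos (phase t x (S k))) 0 N))
                     (Rabs (sum_from (fun k => sin (phase t x (S k))) 0 N))).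
  pose proof (Rabs_pos (sum_from (fun k => cos (phase t x (S k))) 0 N)).
  unfold Rdiv in *. nra.
Qed.
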